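(* Let $n>k\geq 1$, $r=n-k$, and for $i\in[m]$ let $1\leq h_i\leq n-k$ and $k\leq d_i\leq n-h_i$ be integers with $h_i\mid (d_i-k)$. Put $s_i=\frac{d_i-k+h_i}{h_i}$, where the pairs are indexed so that $s_1\leq s_2\leq\cdots\leq s_m$; let $s=\mathrm{lcm}(s_1,\ldots,s_{m-1})$ (with $s=1$ if $m=1$) and $\ell=s\cdot s_m^n$. Let $F$ be a finite field with $|F|\geq s_m n$ and let $\lambda_{i,j}$, $i\in[n]$, $j\in[0,s_m-1]$, be $s_m n$ distinct elements of $F$. Let $\mathcal{C}_2$ be the set of all $(\bm c_1,\ldots,\bm c_n)$ with $\bm c_i=(c_{i,0},\ldots,c_{i,\ell-1})\in F^\ell$ satisfying $$\sum_{i=1}^n \lambda_{i,a_i}^{t-1} c_{i,(a,b)}=0\quad\text{for all } a\in[0,s_m^n-1],\ b\in[0,s-1],\ t\in[r].$$ Then $\mathcal{C}_2$ is an $(n,k,\ell)$ MDS array code satisfying the $(h_i,d_i)$-optimal repair property for every $i\in[m]$ simultaneously.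
   Context: Notation: $[n]=\{1,\ldots,n\}$, $[i,j]=\{i,\ldots,j\}$. Each $\tau\in[0,\ell-1]$ is written uniquely as $\tau=b\cdot s_m^n+\sum_{i=1}^n a_i s_m^{i-1}$ with $b\in[0,s-1]$, $a_i\in[0,s_m-1]$; we write $a=(a_1,\ldots,a_n)=\sum_i a_i s_m^{i-1}$ and $\tau=(a,b)$, so $c_{i,(a,b)}=c_{i,\tau}$. An $(n,k,\ell)$ MDS array code over $F$ is an $F$-linear set of vectors $(\bm c_1,\ldots,\bm c_n)$, $\bm c_i\in F^\ell$ (node $i$ stores $\bm c_i$), of dimension $k\ell$, such that any $k$ coordinates $\bm c_i$ determine the codeword. For $1\leq h\leq n-k$, $k\leq d\leq n-h$, the $(h,d)$-optimal repair property means: for every $h$-subset $\mathcal{H}\subseteq[n]$ and every $d$-subset $\mathcal{R}\subseteq[n]\setminus\mathcal{H}$, each helper $j\in\mathcal{R}$ can send $\beta=\frac{h\ell}{d-k+h}$ symbols of $F$ computed from $\bm c_j$ such that from these $\frac{dh\ell}{d-k+h}$ symbols in total all $\bm c_i$, $i\in\mathcal{H}$, are determined, for every codeword (equality in the cut-set bound). *)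

From HB Require Import structures.
From mathcomp Require Import all_boot all_order all_algebra.
Set Implicit Arguments. Unset Strict Implicit. Unset Printing Implicit Defensive.
Import GRing.Theory.
Local Open Scope ring_scope.

(* A codeword is a matrix c : 'M[F]_(n, ell); node i (0-based) stores row i c. *)

Definition MDS_array_code (F : fieldType) (n k ell : nat)
    (C : 'M[F]_(n, ell) -> Prop) : Prop :=
  (exists V : {vspace 'M[F]_(n, ell)},
      (forall c, c \in V <-> C c) /\ \dim V = (k * ell)%N) /\
  (forall S : {set 'I_n}, #|S| = k ->
     forall c c', C c -> C c' ->
       (forall i, i \in S -> row i c = row i c') -> c = c').

Definition optimal_repair (F : fieldType) (n k ell h d : nat)
    (C : 'M[F]_(n, ell) -> Prop) : Prop :=
  ((d - k + h) %| h * ell)%N /\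
  forall H R : {set 'I_n}, #|H| = h -> #|R| = d -> [disjoint H & R] ->
    exists f : 'I_n -> 'rV[F]_ell -> 'rV[F]_(h * ell %/ (d - k + h)),
      forall c c', C c -> C c' ->
        (forall j, j \in R -> f j (row j c) = f j (row j c')) ->
        forall i, i \in H -> row i c = row i c'.

(* s_i = (d_i - k + h_i) / h_i  (indices i = 0 .. m-1) *)
Definition s_of (k : nat) (h d : nat -> nat) (i : nat) : nat :=
  ((d i - k + h i) %/ h i)%N.

Definition s_lcm (k m : nat) (h d : nat -> nat) : nat :=
  \big[lcmn/1%N]_(i < m.-1) s_of k h d i.

Definition s_last (k m : nat) (h d : nat -> nat) : nat := s_of k h d m.-1.

Definition ell_of (n k m : nat) (h d : nat -> nat) : nat :=
  (s_lcm k m h d * (s_last k m h d) ^ n)%N.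

(* For tau = b * sm^n + a with a = sum_i a_i sm^i (0-based i), the digit a_i. *)
Definition digit (sm n : nat) (tau i : nat) : nat :=
  ((tau %% sm ^ n) %/ sm ^ i %% sm)%N.

(* The code C_2: for all tau = (a,b) and t in [r] (0-based exponent t-1),
   sum_i lambda_{i, a_i}^(t-1) c_{i,tau} = 0. *)
Definition C2 (F : fieldType) (n k m : nat) (h d : nat -> nat)
    (lambda : nat -> nat -> F)
    (c : 'M[F]_(n, ell_of n k m h d)) : Prop :=
  forall (tau : 'I_(ell_of n k m h d)) (t : 'I_(n - k)),
    \sum_(i < n) (lambda i (digit (s_last k m h d) n tau i)) ^+ t * c i tau = 0.

Arguments MDS_array_code F n k ell C : clear implicits.
Arguments optimal_repair F n k ell h d C : clear implicits.
Arguments C2 F n k m h d lambda c : clear implicits.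

From HB Require Import structures.
From mathcomp Require Import all_boot all_order all_algebra.
From mathcomp Require Import zify.
Set Implicit Arguments.
Unset Strict Implicit.
Unset Printing Implicit Defensive.

Import GRing.Theory.
Local Open Scope ring_scope.

(* At a fixed index tau the r = n - k parity checks say that the power sums
   sum_i lambda_{i,a_i}^t c_{i,tau}, t < r, vanish; since the symbols
   lambda_{i,a_i} of distinct nodes are distinct, a Vandermonde argument shows
   that a codeword vanishing on k nodes vanishes, which with rank-nullity gives
   the MDS property.
   For repair, fix a failed node i1 in H and group the indices into classes of
   s_i elements: the members of a class share their digits off H, the
   differences a_j - a_{i1} (mod s_m) for j in H, and the block of s_i
   consecutive values containing the pivot b s_m + a_{i1}.  Each helper sends
   its class sums.  Summing the parity checks over a class, a helper only
   contributes its (constant) symbol times its class sum, and the remaining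
   terms involve at most h s_i + (n - h - d) = n - k distinct symbols; as the
   failed nodes carry distinct digits at distinct members of a class, the same
   Vandermonde argument recovers them. *)

Lemma power_sums_fiber_eq0 (F : fieldType) (I : finType) (r : nat)
    (z y : I -> F) (Z : seq F) :
  (size Z <= r)%N -> (forall p, y p != 0 -> z p \in Z) ->
  (forall t, (t < r)%N -> \sum_p z p ^+ t * y p = 0) ->
  forall w, \sum_(p | z p == w) y p = 0.
Proof.
move=> sizeZ suppZ power_sums w.
have [wZ|wNZ] := boolP (w \in Z); last first.
  apply: big1 => p /eqP zpw; apply: contraNeq wNZ => /suppZ.
  by rewrite zpw.
(* Pair the power sums with the coefficients of P: only the fiber of w survives. *)
set P := \prod_(v <- [seq v <- Z | v != w]) ('X - v%:P).
have sizeP : (size P <= r)%N.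
  rewrite size_prod_XsubC size_filter; apply: leq_trans sizeZ.
  rewrite -(count_predC (fun v => v != w) Z) -addn1 leq_add2l -has_count.
  by apply/hasP; exists w; rewrite //= negbK.
have P_sum : \sum_p P.[z p] * y p = 0.
  under eq_bigr do rewrite horner_coef mulr_suml.
  rewrite exchange_big big1 //= => t _.
  under eq_bigr do rewrite -mulrA.
  by rewrite -mulr_sumr power_sums ?mulr0 // (leq_trans (ltn_ord t)).
have P_fiber : \sum_p P.[z p] * y p = P.[w] * \sum_(p | z p == w) y p.
  rewrite (bigID (fun p => z p == w)) /= big_distrr /= [X in _ + X]big1 ?addr0.
    by apply: eq_bigr => p /eqP ->.
  move=> p zpw; have [->|/suppZ zpZ] := eqVneq (y p) 0; first by rewrite mulr0.
  by apply/eqP; rewrite mulf_eq0 -/(root P _) root_prod_XsubC mem_filter zpw zpZ.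
have Pw : P.[w] != 0 by rewrite -/(root P w) root_prod_XsubC mem_filter eqxx.
by move: P_sum; rewrite P_fiber => /eqP; rewrite mulf_eq0 (negbTE Pw) => /eqP.
Qed.

Lemma eq_divn_modn p q a b :
  (0 < p <= q)%N -> (a %/ p = b %/ p)%N -> (a %% q = b %% q)%N -> a = b.
Proof.
move=> /andP[p_gt0 pq].
wlog ab : a b / (a <= b)%N => [wlog_ab eq_div eq_mod|eq_div eq_mod].
  by case/orP: (leq_total a b) => /wlog_ab sym; [apply: sym | symmetry; apply: sym].
have ba_lt_q : (b - a < q)%N.
  apply: leq_trans pq; rewrite ltn_subLR // [b](divn_eq _ p) [a](divn_eq _ p) eq_div.
  by rewrite -addnA ltn_add2l ltn_addl ?ltn_pmod.
have q_dvd : (q %| b - a)%N by rewrite -eqn_mod_dvd // eq_mod.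
have [|ba_gt0] := posnP (b - a); first lia.
by have := dvdn_leq ba_gt0 q_dvd; lia.
Qed.

Lemma digit_lt sm n tau j : (0 < sm)%N -> (digit sm n tau j < sm)%N.
Proof. exact: ltn_pmod. Qed.

Lemma base_digits_inj sm n a b : (0 < sm)%N -> (a < sm ^ n)%N -> (b < sm ^ n)%N ->
  (forall j, j < n -> a %/ sm ^ j %% sm = b %/ sm ^ j %% sm)%N -> a = b.
Proof.
move=> sm_gt0; elim: n a b => [|n IHn] a b.
  by rewrite expn0 !ltnS !leqn0 => /eqP-> /eqP->.
rewrite expnSr -!ltn_divLR // => a_lt b_lt eq_digits.
rewrite (divn_eq a sm) (divn_eq b sm); congr (_ * _ + _)%N.
  apply: IHn => // j j_lt; rewrite -!divnMA -expnS; exact: eq_digits.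
by have := eq_digits 0%N isT; rewrite !expn0 !divn1.
Qed.

Lemma digits_inj sm n a b : (0 < sm)%N -> (a %/ sm ^ n = b %/ sm ^ n)%N ->
  (forall j, j < n -> digit sm n a j = digit sm n b j)%N -> a = b.
Proof.
move=> sm_gt0 eq_high eq_digits.
have sm_n_gt0 : (0 < sm ^ n)%N by rewrite expn_gt0 sm_gt0.
rewrite (divn_eq a (sm ^ n)) (divn_eq b (sm ^ n)) eq_high; congr (_ + _)%N.
by apply: (@base_digits_inj sm n); rewrite ?ltn_pmod.
Qed.

Lemma modn_add_sub_mod q x y : (y < q)%N -> ((x + (y + q - x %% q) %% q) %% q = y)%N.
Proof.
move=> y_lt_q; have q_gt0 : (0 < q)%N by apply: leq_ltn_trans y_lt_q.
rewrite modnDmr -modnDml subnKC; first by rewrite modnDr modn_small.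
by rewrite ltnW // ltn_addl // ltn_pmod.
Qed.

Section RepairKey.
Variables (n sm s sg : nat) (H : {set 'I_n}) (i1 : 'I_n).
Hypotheses (sg_gt0 : (0 < sg)%N) (sg_le_sm : (sg <= sm)%N) (sg_dvd : (sg %| s * sm)%N).
Hypothesis i1H : i1 \in H.

Let sm_gt0 : (0 < sm)%N := leq_trans sg_gt0 sg_le_sm.
Local Notation dig tau j := (digit sm n tau j).

Definition shifted_digit (tau j : nat) : nat := ((dig tau j + sm - dig tau i1) %% sm)%N.

Definition pivot (tau : nat) : nat := (tau %/ sm ^ n * sm + dig tau i1)%N.

Definition key_digit (tau : nat) (j : 'I_n) : nat :=
  if j \in H then shifted_digit tau j else dig tau j.

Definition class_digits (tau j : nat) : seq nat :=
  [seq ((p + shifted_digit tau j) %% sm)%N | p <- iota (pivot tau %/ sg * sg) sg].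

Lemma key_digit_lt tau j : (key_digit tau j < sm)%N.
Proof. by rewrite /key_digit; case: ifP => _; rewrite ltn_pmod. Qed.

Lemma pivot_div_lt (tau : 'I_(s * sm ^ n)) : (pivot tau %/ sg < s * sm %/ sg)%N.
Proof.
rewrite ltn_divLR // divnK // /pivot.
have high_lt : (tau %/ sm ^ n < s)%N by rewrite ltn_divLR ?expn_gt0 ?sm_gt0.
apply: (@leq_trans ((tau %/ sm ^ n).+1 * sm)); last by rewrite leq_mul2r high_lt orbT.
by rewrite mulSn [X in (_ < X)%N]addnC ltn_add2l ltn_pmod.
Qed.

Definition repair_key_type :=
  ({ffun {j : 'I_n | j != i1} -> 'I_sm} * 'I_(s * sm %/ sg))%type.

Definition repair_key (tau : 'I_(s * sm ^ n)) : repair_key_type :=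
  ([ffun j => Ordinal (key_digit_lt tau (val j))], Ordinal (pivot_div_lt tau)).

Lemma card_repair_key_type : #|{: repair_key_type}| = (sm ^ n.-1 * (s * sm %/ sg))%N.
Proof. by rewrite card_prod card_ffun card_sig cardC1 !card_ord. Qed.

Lemma pivot_mod tau : (pivot tau %% sm = dig tau i1)%N.
Proof. by rewrite modnMDl modn_small ?ltn_pmod. Qed.

Lemma digit_pivot_shifted tau j : dig tau j = ((pivot tau + shifted_digit tau j) %% sm)%N.
Proof. by rewrite /shifted_digit -pivot_mod modn_add_sub_mod ?ltn_pmod. Qed.

Section EqualKeys.
Variables tau tau' : 'I_(s * sm ^ n).
Hypothesis eq_key : repair_key tau = repair_key tau'.

Lemma repair_key_pivot : (pivot tau %/ sg = pivot tau' %/ sg)%N.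
Proof. exact: (congr1 (fun x => val x.2) eq_key). Qed.

Lemma repair_key_digit j : j != i1 -> key_digit tau j = key_digit tau' j.
Proof.
move=> j_neq; have := congr1 (fun x : repair_key_type => val (x.1 (exist _ j j_neq))) eq_key.
by rewrite /= !ffunE.
Qed.

Lemma repair_key_digit_out j : j \notin H -> dig tau j = dig tau' j.
Proof.
move=> jNH; have j_neq : j != i1 by apply: contraNneq jNH => ->.
by have := repair_key_digit j_neq; rewrite /key_digit (negbTE jNH).
Qed.

Lemma repair_key_shifted j : j \in H -> shifted_digit tau j = shifted_digit tau' j.
Proof.
move=> jH; have [->|j_neq] := eqVneq j i1; first by rewrite /shifted_digit !addKn !modnn.
by have := repair_key_digit j_neq; rewrite /key_digit jH.
Qed.

Lemma repair_key_class_digits j : j \in H -> dig tau j \in class_digits tau' j.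
Proof.
move=> jH; rewrite digit_pivot_shifted repair_key_shifted //; apply: map_f.
rewrite mem_iota -repair_key_pivot leq_trunc_div /=.
by rewrite addnC -mulSn ltn_ceil.
Qed.

Lemma repair_key_inj_at j : j \in H -> dig tau j = dig tau' j -> tau = tau'.
Proof.
move=> jH; rewrite [LHS]digit_pivot_shifted [RHS]digit_pivot_shifted.
rewrite (repair_key_shifted jH) => /eqP; rewrite eqn_modDr => /eqP eq_pivot_mod.
have eq_pivot : pivot tau = pivot tau'.
  by apply: (@eq_divn_modn sg sm); rewrite ?sg_gt0 ?repair_key_pivot.
apply/val_inj/(@digits_inj sm n) => //.
  have high t : (pivot t %/ sm = t %/ sm ^ n)%N.
    by rewrite divnMDl // (divn_small (ltn_pmod _ sm_gt0)) addn0.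
  by rewrite -!high eq_pivot.
move=> i i_lt; pose i' := Ordinal i_lt; rewrite -[i]/(val i').
have [i'H|i'NH] := boolP (i' \in H); last exact: repair_key_digit_out.
by rewrite digit_pivot_shifted eq_pivot repair_key_shifted // -digit_pivot_shifted.
Qed.

End EqualKeys.
End RepairKey.

Section ParityCode.
Variables (F : fieldType) (n k sm ell : nat) (lambda : nat -> nat -> F).

Definition symbol (tau i : nat) : F := lambda i (digit sm n tau i).

Definition parity_code (c : 'M[F]_(n, ell)) : Prop :=
  forall (tau : 'I_ell) (t : 'I_(n - k)), \sum_(i < n) symbol tau i ^+ t * c i tau = 0.

Definition syndrome (c : 'M[F]_(n, ell)) : 'M[F]_(n - k, ell) :=
  \matrix_(t, tau) \sum_(i < n) symbol tau i ^+ t * c i tau.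

Fact syndrome_is_linear : linear syndrome.
Proof.
move=> a c c'; apply/matrixP => t tau; rewrite !mxE mulr_sumr -big_split.
by apply: eq_bigr => i _; rewrite !mxE mulrDr mulrCA.
Qed.

HB.instance Definition _ := GRing.isLinear.Build F _ _ _ syndrome syndrome_is_linear.

Lemma parity_codeP c : parity_code c <-> syndrome c = 0.
Proof.
split=> [c_code|/matrixP c_code tau t].
  by apply/matrixP => t tau; rewrite !mxE c_code.
by have := c_code t tau; rewrite !mxE.
Qed.

Lemma parity_codeB c c' : parity_code c -> parity_code c' -> parity_code (c - c').
Proof.
move=> /parity_codeP c_code /parity_codeP c'_code; apply/parity_codeP.
by rewrite linearB /= c_code c'_code subr0.
Qed.

Hypothesis sm_gt0 : (0 < sm)%N.
Hypothesis lambda_inj : forall i1 i2 j1 j2, (i1 < n)%N -> (i2 < n)%N ->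
  (j1 < sm)%N -> (j2 < sm)%N -> lambda i1 j1 = lambda i2 j2 -> i1 = i2 /\ j1 = j2.

Lemma symbol_inj tau tau' (i j : 'I_n) :
  symbol tau i = symbol tau' j -> i = j /\ digit sm n tau i = digit sm n tau' j.
Proof. by case/lambda_inj; rewrite ?ltn_ord ?digit_lt // => /val_inj. Qed.

Lemma parity_code_eq0 (S : {set 'I_n}) x :
  (#|~: S| <= n - k)%N -> parity_code x -> (forall i, i \in S -> row i x = 0) -> x = 0.
Proof.
move=> card_S x_code x_S; apply/matrixP => i tau; rewrite mxE.
have suppZ j : x j tau != 0 -> symbol tau j \in [seq symbol tau l | l : 'I_n in ~: S].
  move=> x_neq0; apply: image_f; rewrite inE; apply: contra x_neq0 => jS.
  by have := congr1 (fun r : 'rV_ell => r 0 tau) (x_S j jS); rewrite !mxE => ->.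
have power_sums t : (t < n - k)%N -> \sum_(j < n) symbol tau j ^+ t * x j tau = 0.
  by move=> t_lt; exact: x_code tau (Ordinal t_lt).
have := power_sums_fiber_eq0 _ suppZ power_sums (symbol tau i).
rewrite size_image => /(_ card_S); rewrite (big_pred1 i) // => j.
by apply/eqP/eqP => [/symbol_inj[]|->].
Qed.

Lemma dim_parity_code : (k <= n)%N -> \dim (lker (linfun syndrome)) = (k * ell)%N.
Proof.
move=> kn; set V := lker _.
pose top := linfun (@mulmx F k n ell (rowsub (widen_ord kn) 1%:M)).
apply/eqP; rewrite eqn_leq; apply/andP; split.
  have V_top : (V :&: lker top = 0)%VS.
    apply/vspaceP => c; rewrite memv_cap memv0 !memv_ker !lfunE /=.
    apply/andP/eqP => [[/eqP/parity_codeP c_code /eqP top_c]|->]; last by rewrite !linear0.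
    apply: (parity_code_eq0 (S := [set widen_ord kn i | i in 'I_k])) => //.
      rewrite cardsCs setCK card_imset ?card_ord // => a b eq_ab.
      exact/val_inj/(congr1 val eq_ab).
    move=> _ /imsetP[i _ ->]; rewrite -row_rowsub -[c]mul1mx -mul_rowsub_mx.
    by rewrite top_c row0.
  by rewrite -(limg_dim_eq V_top) -[(k * ell)%N](dim_matrix F) -dimvf dimvS ?subvf.
have := limg_ker_dim (linfun syndrome) fullv.
rewrite capfv dimvf dim_matrix -/V.
have : (\dim (linfun syndrome @: fullv) <= (n - k) * ell)%N.
  by rewrite -[((n - k) * ell)%N](dim_matrix F) -dimvf dimvS ?subvf.
have := leq_mul kn (leqnn ell); rewrite mulnBl; lia.
Qed.

Lemma parity_code_MDS : (k <= n)%N -> MDS_array_code F n k ell parity_code.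
Proof.
move=> kn; split.
  exists (lker (linfun syndrome)); split; last exact: dim_parity_code.
  by move=> c; rewrite memv_ker lfunE parity_codeP; split => /eqP.
move=> S card_S c c' c_code c'_code eq_rows; apply/eqP; rewrite -subr_eq0; apply/eqP.
apply: (parity_code_eq0 (S := S)); first by rewrite cardsCs setCK card_S card_ord.
  exact: parity_codeB.
by move=> i iS; rewrite linearB /= eq_rows ?subrr.
Qed.

Lemma parity_code_class_check (K : eqType) (key : 'I_ell -> K) (R : {set 'I_n}) x tau0
    (t : 'I_(n - k)) :
  (forall tau j, key tau = key tau0 -> j \in R -> digit sm n tau j = digit sm n tau0 j) ->
  parity_code x -> (forall j, j \in R -> \sum_(tau | key tau == key tau0) x j tau = 0) ->
  \sum_(j < n | j \notin R) \sum_(tau | key tau == key tau0) symbol tau j ^+ t * x j tau = 0.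
Proof.
move=> key_R x_code helper_sums.
have : \sum_(j < n) \sum_(tau | key tau == key tau0) symbol tau j ^+ t * x j tau = 0.
  by rewrite exchange_big big1 // => tau _; exact: x_code.
rewrite (bigID (fun j => j \in R)) /= big1 ?add0r // => j jR.
under eq_bigr => tau /eqP eq_key do rewrite /symbol (key_R _ _ eq_key jR).
by rewrite -mulr_sumr helper_sums ?mulr0.
Qed.

Lemma parity_code_class_repair (K : eqType) (key : 'I_ell -> K)
    (D : 'I_ell -> 'I_n -> seq nat) (sg : nat) (H R : {set 'I_n}) x :
  [disjoint H & R] -> (#|H| * sg + #|~: (H :|: R)| <= n - k)%N ->
  (forall tau j, size (D tau j) <= sg)%N ->
  (forall tau tau' j, key tau = key tau' -> j \in H -> digit sm n tau j \in D tau' j) ->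
  (forall tau tau' j, key tau = key tau' -> j \notin H ->
     digit sm n tau j = digit sm n tau' j) ->
  (forall tau tau' j, key tau = key tau' -> j \in H ->
     digit sm n tau j = digit sm n tau' j -> tau = tau') ->
  parity_code x ->
  (forall j tau0, j \in R -> \sum_(tau | key tau == key tau0) x j tau = 0) ->
  forall i, i \in H -> row i x = 0.
Proof.
move=> dHR card_HR size_D key_D key_out key_inj x_code helper_sums i iH.
apply/rowP => tau0; rewrite !mxE.
have iNR : i \notin R by rewrite (disjointFr dHR iH).
pose y (p : 'I_n * 'I_ell) :=
  if (key p.2 == key tau0) && (p.1 \notin R) then x p.1 p.2 else 0.
pose z (p : 'I_n * 'I_ell) := symbol p.2 p.1.
pose Z := [seq lambda j e | j : 'I_n <- enum H, e <- D tau0 j] ++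
          [seq symbol tau0 j | j : 'I_n in ~: (H :|: R)].
have sizeZ : (size Z <= n - k)%N.
  rewrite size_cat size_allpairs_dep size_image; apply: leq_trans card_HR.
  rewrite leq_add2r cardE; elim: (enum H) => //= j js IHjs.
  by rewrite mulSn leq_add ?size_D.
have suppZ p : y p != 0 -> z p \in Z.
  case: p => j tau; rewrite /y /=.
  case: ifP => [/andP[/eqP eq_key jNR] _|]; last by rewrite eqxx.
  rewrite mem_cat; have [jH|jNH] := boolP (j \in H).
    by apply/orP; left; apply: allpairs_f_dep; rewrite ?mem_enum ?key_D.
  apply/orP; right; rewrite /z /symbol /= (key_out _ _ _ eq_key jNH).
  by apply: image_f; rewrite !inE negb_or jNH.
have power_sums t : (t < n - k)%N -> \sum_p z p ^+ t * y p = 0.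
  move=> t_lt; rewrite -(pair_bigA _ (fun j tau => z (j, tau) ^+ t * y (j, tau))) /=.
  have key_R tau j : key tau = key tau0 -> j \in R -> digit sm n tau j = digit sm n tau0 j.
    by move=> eq_key jR; rewrite (key_out _ _ _ eq_key) ?(disjointFl dHR jR).
  rewrite -[RHS](parity_code_class_check (Ordinal t_lt) key_R x_code (helper_sums^~ tau0)).
  rewrite [RHS]big_mkcond; apply: eq_bigr => j _; rewrite /y /=.
  case: (j \in R) => /=; first by apply: big1 => tau _; rewrite andbF mulr0.
  rewrite [RHS]big_mkcond; apply: eq_bigr => tau _.
  by rewrite andbT; case: ifP; rewrite ?mulr0.
have := power_sums_fiber_eq0 sizeZ suppZ power_sums (z (i, tau0)).
rewrite (bigD1 (i, tau0)) //= big1 ?addr0 => [|[j tau] /andP[/= /eqP eq_z neq]].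
  by rewrite /y /= eqxx iNR.
rewrite /y /=; case: ifP => // /andP[/eqP eq_key _].
case: (symbol_inj eq_z) => /= eq_j; subst j => eq_digit.
by move: neq; rewrite (key_inj _ _ _ eq_key iH eq_digit) eqxx.
Qed.

End ParityCode.

Lemma parity_code_optimal_repair (F : fieldType) (n k sm s sg h d : nat)
    (lambda : nat -> nat -> F) :
  (forall i1 i2 j1 j2, (i1 < n)%N -> (i2 < n)%N -> (j1 < sm)%N -> (j2 < sm)%N ->
     lambda i1 j1 = lambda i2 j2 -> i1 = i2 /\ j1 = j2) ->
  (0 < n)%N -> (0 < h)%N -> (k <= d)%N ->
  (0 < sg)%N -> (sg <= sm)%N -> (sg %| s * sm)%N -> (d - k + h = h * sg)%N ->
  optimal_repair F n k (s * sm ^ n) h d (parity_code k sm lambda).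
Proof.
move=> lambda_inj n_gt0 h_gt0 kd sg_gt0 sg_le_sm sg_dvd dkh.
have sm_gt0 : (0 < sm)%N := leq_trans sg_gt0 sg_le_sm.
set ell := (s * sm ^ n)%N.
have ell_eq : ell = (s * sm * sm ^ n.-1)%N by rewrite -mulnA -expnS prednK.
have beta_eq : (h * ell %/ (d - k + h) = sm ^ n.-1 * (s * sm %/ sg))%N.
  by rewrite dkh divnMl // ell_eq -divn_mulAC // mulnC.
split; first by rewrite dkh dvdn_pmul2l // ell_eq dvdn_mulr.
move=> H R card_H card_R dHR.
have [i1 i1H] : exists i1, i1 \in H by apply/set0Pn; rewrite -card_gt0 card_H.
pose key := repair_key H i1 sg_gt0 sg_le_sm sg_dvd.
pose class_index tau :=
  cast_ord (etrans (card_repair_key_type sm s sg i1) (esym beta_eq)) (enum_rank (key tau)).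
pose send (v : 'rV[F]_ell) := \row_g \sum_(tau < ell | class_index tau == g) v 0 tau.
have sendE j c tau0 :
    send (row j c) 0 (class_index tau0) = \sum_(tau | key tau == key tau0) c j tau.
  rewrite mxE; apply: eq_big => [tau|tau _]; last by rewrite mxE.
  by rewrite (inj_eq (@cast_ord_inj _ _ _)) (inj_eq enum_rank_inj).
exists (fun _ => send) => c c' c_code c'_code eq_sends i iH.
apply/eqP; rewrite -subr_eq0 -linearB; apply/eqP.
apply: (parity_code_class_repair sm_gt0 lambda_inj (k := k) (key := key) (sg := sg)
  (H := H) (R := R) (D := fun tau j => class_digits sm sg i1 tau j)) iH => //.
- have := cardsC (H :|: R).
  rewrite cardsU (disjoint_setI0 dHR) cards0 card_ord card_H card_R; lia.
- by move=> tau j; rewrite size_map size_iota.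
- by move=> tau tau' j eq_key /(repair_key_class_digits eq_key).
- by move=> tau tau' j eq_key /(repair_key_digit_out i1H eq_key).
- by move=> tau tau' j eq_key /(repair_key_inj_at i1H eq_key).
- exact: parity_codeB.
move=> j tau0 jR; have := congr1 (fun v : 'rV_ _ => v 0 (class_index tau0)) (eq_sends j jR).
by rewrite /= !sendE => eq_sum; under eq_bigr do rewrite !mxE; rewrite sumrB eq_sum subrr.
Qed.

Lemma mul_s_of k h d i : (h i %| d i - k)%N -> (h i * s_of k h d i = d i - k + h i)%N.
Proof. by move=> h_dvd; rewrite mulnC divnK // dvdn_add. Qed.

Lemma s_of_gt0 k h d i : (0 < h i)%N -> (0 < s_of k h d i)%N.
Proof. by move=> h_gt0; rewrite divn_gt0 // leq_addl. Qed.


Lemma s_of_dvd_lcm k m h d i :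
  (i < m)%N -> (s_of k h d i %| s_lcm k m h d * s_last k m h d)%N.
Proof.
move=> im; have [i_lt|i_ge] := ltnP i m.-1.
  by apply: dvdn_mulr; exact: (biglcmn_sup (Ordinal i_lt)).
by apply: dvdn_mull; rewrite /s_last (_ : m.-1 = i) //; lia.
Qed.

Theorem theorem2 (F : finFieldType) (n k m : nat) (h d : nat -> nat)
    (lambda : nat -> nat -> F) :
  (1 <= k)%N -> (k < n)%N -> (1 <= m)%N ->
  (forall i, (i < m)%N ->
     [/\ (1 <= h i)%N, (h i <= n - k)%N, (k <= d i)%N, (d i <= n - h i)%N
       & (h i %| d i - k)%N]) ->
  (forall i j, (i <= j)%N -> (j < m)%N -> (s_of k h d i <= s_of k h d j)%N) ->
  (s_last k m h d * n <= #|F|)%N ->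
  (forall i1 i2 j1 j2, (i1 < n)%N -> (i2 < n)%N ->
     (j1 < s_last k m h d)%N -> (j2 < s_last k m h d)%N ->
     lambda i1 j1 = lambda i2 j2 -> i1 = i2 /\ j1 = j2) ->
  MDS_array_code F n k (ell_of n k m h d) (C2 F n k m h d lambda) /\
  (forall i, (i < m)%N ->
     optimal_repair F n k (ell_of n k m h d) (h i) (d i) (C2 F n k m h d lambda)).
Proof.
(* The bound on #|F| is implied by the distinctness of the lambda's. *)
move=> k_gt0 lt_kn m_gt0 params sorted _ lambda_inj.
have s_le_last i : (i < m)%N -> (s_of k h d i <= s_last k m h d)%N.
  by move=> im; apply: sorted; lia.
have last_gt0 : (0 < s_last k m h d)%N.
  have last_lt : (m.-1 < m)%N by lia.
  by have [h_gt0 _ _ _ _] := params _ last_lt; exact: s_of_gt0.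
split; first exact: parity_code_MDS last_gt0 lambda_inj (ltnW lt_kn).
move=> i im; have [h_gt0 _ kd _ h_dvd] := params i im.
apply: (parity_code_optimal_repair lambda_inj _ h_gt0 kd (s_of_gt0 _ _ h_gt0)
  (s_le_last i im) (s_of_dvd_lcm _ _ _ im) (esym (mul_s_of h_dvd))).
exact: ltn_trans k_gt0 lt_kn.
Qed.
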